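(* Let $V$ be a real vector space, $R:V\to\mathbb{R}\cup\{+\infty\}$ and $f:\mathbb{R}^m\to\mathbb{R}\cup\{+\infty\}$ convex, $\Phi:V\to\mathbb{R}^m$ linear, $S$ the set of minimizers of $\min_u R(u)+f(\Phi u)$, and $p\in S$ with $R(p)+f(\Phi p)<+\infty$. Let $K=\mathrm{lin}(\{u: R(u)\le R(p)\})$ and $L=\ker\Phi$. Then the minimal face $F(p,S)$ is invariant by $K\cap L$, i.e. $F(p,S)+(K\cap L)\subseteq F(p,S)$.
   Context: A face of a convex set $C$ is a convex $F\subseteq C$ such that every open segment $]x,y[=\{tx+(1-t)y:0<t<1\}$ ($x\ne y$) contained in $C$ which intersects $F$ is contained in $F$; $F(p,C)$ is the intersection of all faces of $C$ containing $p$. The lineality space of a nonempty convex set $C$ is $\mathrm{lin}(C)=\{v: C+\mathbb{R}v\subseteq C\}$. *)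

From HB Require Import structures.
From mathcomp Require Import all_boot all_order all_algebra.
Set Implicit Arguments. Unset Strict Implicit. Unset Printing Implicit Defensive.
Import Order.TTheory GRing.Theory Num.Theory.
Local Open Scope ring_scope.

(* Extended reals R ∪ {+oo}: [Some x] is the finite value x, [None] is +oo. *)
Definition ext_le {R : realFieldType} (a b : option R) : Prop :=
  match a, b with
  | _, None => True
  | None, Some _ => False
  | Some x, Some y => x <= y
  end.

Definition ext_add {R : realFieldType} (a b : option R) : option R :=
  match a, b with
  | Some x, Some y => Some (x + y)
  | _, _ => None
  end.

Definition convex_fun {R : realFieldType} {V : lmodType R} (g : V -> option R) : Prop :=
  forall (x y : V) (a b t : R), g x = Some a -> g y = Some b -> 0 < t -> t < 1 ->
    ext_le (g (t *: x + (1 - t) *: y)) (Some (t * a + (1 - t) * b)).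

Definition convex_set {R : realFieldType} {V : lmodType R} (C : V -> Prop) : Prop :=
  forall (x y : V) (t : R), C x -> C y -> 0 <= t -> t <= 1 -> C (t *: x + (1 - t) *: y).

Definition oseg {R : realFieldType} {V : lmodType R} (x y : V) (z : V) : Prop :=
  exists t : R, 0 < t /\ t < 1 /\ z = t *: x + (1 - t) *: y.

Definition is_face {R : realFieldType} {V : lmodType R} (C F : V -> Prop) : Prop :=
  convex_set F /\ (forall z, F z -> C z) /\
  (forall x y : V, x <> y -> (forall z, oseg x y z -> C z) ->
     (exists z, oseg x y z /\ F z) -> forall z, oseg x y z -> F z).

Definition min_face {R : realFieldType} {V : lmodType R} (p : V) (C : V -> Prop) : V -> Prop :=
  fun z => forall F, is_face C F -> F p -> F z.

Definition lineality {R : realFieldType} {V : lmodType R} (C : V -> Prop) : V -> Prop :=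
  fun v => forall c (s : R), C c -> C (c + s *: v).

From HB Require Import structures.
From mathcomp Require Import all_boot all_order all_algebra.
From mathcomp Require Import ring lra.
Import Order.TTheory GRing.Theory Num.Theory.
Set Implicit Arguments. Unset Strict Implicit. Unset Printing Implicit Defensive.
Local Open Scope ring_scope.

(* The minimizers of a convex objective form a convex set S, and the whole
   line p + R v lies in S: moving along v in K ∩ L does not increase R and
   does not change Phi. For any face F of S containing p, the set of points u
   whose line u + R v stays in F is again a face of S containing p, so it
   contains the minimal face F(p,S); hence F(p,S) is invariant under v. *)

Section ExtendedReals.
Variable R : realFieldType.
Implicit Types a b c : option R.

Lemma ext_le_refl a : ext_le a a.
Proof. by case: a => //= x. Qed.

Lemma ext_le_trans a b c : ext_le a b -> ext_le b c -> ext_le a c.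
Proof. by case: a => [x|]; case: b => [y|]; case: c => [z|] //=; apply: le_trans. Qed.

Lemma ext_le_anti a b : ext_le a b -> ext_le b a -> a = b.
Proof.
case: a => [x|]; case: b => [y|] //= xy yx.
by congr Some; apply/eqP; rewrite eq_le xy yx.
Qed.

Lemma ext_le_addl a a' b : ext_le a a' -> ext_le (ext_add a b) (ext_add a' b).
Proof. by case: a => [x|]; case: a' => [y|]; case: b => [z|] //= xy; rewrite lerD2r. Qed.

End ExtendedReals.

Section ConvexFunctions.
Variables (R : realFieldType) (V : lmodType R).

Lemma convex_fun_linear_comp (W : lmodType R) (Phi : {linear V -> W})
    (f : W -> option R) :
  convex_fun f -> convex_fun (fun u => f (Phi u)).
Proof. by move=> cf x y a b t fx fy t0 t1; rewrite linearD !linearZ; apply: cf. Qed.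

Lemma convex_fun_add (g h : V -> option R) :
  convex_fun g -> convex_fun h -> convex_fun (fun u => ext_add (g u) (h u)).
Proof.
move=> cg ch x y a b t + + t0 t1.
case gx: (g x) => [a1|] //; case hx: (h x) => [a2|] //= [<-].
case gy: (g y) => [b1|] //; case hy: (h y) => [b2|] //= [<-].
move: (cg x y a1 b1 t gx gy t0 t1) (ch x y a2 b2 t hx hy t0 t1).
case: (g _) => [r1|] //; case: (h _) => [r2|] //= le1 le2.
have -> : t * (a1 + a2) + (1 - t) * (b1 + b2) =
          (t * a1 + (1 - t) * b1) + (t * a2 + (1 - t) * b2) by ring.
exact: lerD.
Qed.

(* The argmin of [g] is convex even when [g] is identically +oo. *)
Lemma convex_set_argmin (g : V -> option R) :
  convex_fun g -> convex_set (fun u => forall w, ext_le (g u) (g w)).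
Proof.
move=> cg x y t gx gy t0 t1 w.
have [->|tn0] := eqVneq t 0; first by rewrite scale0r add0r subr0 scale1r.
have [->|tn1] := eqVneq t 1; first by rewrite scale1r subrr scale0r addr0.
have tp : 0 < t by rewrite lt_neqAle eq_sym tn0.
have tq : t < 1 by rewrite lt_neqAle tn1.
move: (gx w); case gxE: (g x) => [a|]; last by case: (g w) => //=; case: (g _).
have gyE : g y = Some a by rewrite -gxE; apply: ext_le_anti; [exact: gy | exact: gx].
have := cg x y a a t gxE gyE tp tq.
rewrite (_ : t * a + (1 - t) * a = a); last by ring.
exact: ext_le_trans.
Qed.

End ConvexFunctions.

Section Faces.
Variables (R : realFieldType) (V : lmodType R).
Implicit Types (C F : V -> Prop) (p u v w x y z : V).

Definition line_core F v : V -> Prop := fun u => forall s : R, F (u + s *: v).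

Lemma combD (t : R) x y d :
  t *: (x + d) + (1 - t) *: (y + d) = t *: x + (1 - t) *: y + d.
Proof. by rewrite !scalerDr addrACA -scalerDl subrKC scale1r. Qed.

Lemma oseg_addr d x y z : oseg (x + d) (y + d) (z + d) <-> oseg x y z.
Proof.
by split=> -[t [t0 [t1 zE]]]; exists t; split => //; split => //;
  [apply: (addIr d); rewrite zE combD | rewrite zE combD].
Qed.

Lemma comb_lineE (t a b : R) p v :
  t *: (p + a *: v) + (1 - t) *: (p + b *: v) = p + (t * a + (1 - t) * b) *: v.
Proof. by rewrite !scalerDr !scalerA addrACA -!scalerDl subrKC scale1r. Qed.

Lemma oseg_line p v (a b : R) z :
  oseg (p + a *: v) (p + b *: v) z -> exists c : R, z = p + c *: v.
Proof. by move=> [t [_ [_ ->]]]; rewrite comb_lineE; eexists. Qed.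

Lemma convex_combination_line C a w v (l s : R) :
  convex_set C -> C a -> line_core C v w -> 0 < l -> l < 1 ->
  C (l *: a + (1 - l) *: w + s *: v).
Proof.
move=> cC Ca Cw l0 l1.
have -> : l *: a + (1 - l) *: w + s *: v =
          l *: a + (1 - l) *: (w + (s / (1 - l)) *: v).
  rewrite scalerDr scalerA -addrA; congr (_ + (_ + _ *: _)); field; lra.
by apply: cC => //; lra.
Qed.

(* Every point [u] of ]x,y[ is a strict convex combination of [w] and a
   point of ]x,y[ lying beyond [u] as seen from [w]. *)
Lemma oseg_line_core C x y w u v :
  convex_set C -> (forall z, oseg x y z -> C z) -> oseg x y w ->
  line_core C v w -> oseg x y u -> line_core C v u.
Proof.
move=> cC xyC [t0 [t0_gt0 [t0_lt1 ->]]] Cw [t [t_gt0 [t_lt1 ->]]] s.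
set mu := t * (1 - t) / 2.
have mu_gt0 : 0 < mu by apply: divr_gt0 => //; nra.
have mu_le : mu <= t / 2 /\ mu <= (1 - t) / 2 by rewrite /mu; split; nra.
set t1 := t + mu * (t - t0).
have Ca : C (t1 *: x + (1 - t1) *: y).
  by apply: xyC; exists t1; split; [|split] => //; rewrite /t1; nra.
set l := 1 / (1 + mu).
have l_gt0 : 0 < l by apply: divr_gt0 => //; lra.
have l_lt1 : l < 1 by rewrite /l ltr_pdivrMr; lra.
have -> : t *: x + (1 - t) *: y =
    l *: (t1 *: x + (1 - t1) *: y) + (1 - l) *: (t0 *: x + (1 - t0) *: y).
  rewrite !scalerDr !scalerA addrACA -!scalerDl.
  by congr (_ *: _ + _ *: _); rewrite /l /t1; field; lra.
exact: convex_combination_line.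
Qed.

Lemma is_face_line_core C F v :
  convex_set C -> is_face C F -> is_face C (line_core F v).
Proof.
move=> cC [cF [FC Fface]]; split; [|split].
- by move=> x y t Fx Fy t0 t1 s; rewrite -combD; apply: cF.
- by move=> u /(_ 0); rewrite scale0r addr0; apply: FC.
- move=> x y xy xyC [w [xyw Fw]] u xyu s.
  have Cw : line_core C v w by move=> s'; apply/FC/Fw.
  apply: (Fface (x + s *: v) (y + s *: v)).
  + by move/addIr.
  + move=> z'; rewrite -(subrK (s *: v) z') oseg_addr => xyz.
    exact: (oseg_line_core cC xyC xyw Cw xyz).
  + by exists (w + s *: v); split; [apply/oseg_addr | apply: Fw].
  + exact/oseg_addr.
Qed.

(* [p] is the midpoint of ]p + 2 s v, p - 2 s v[, which lies in [C]. *)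
Lemma line_core_face C F p v :
  is_face C F -> F p -> line_core C v p -> line_core F v p.
Proof.
move=> [_ [_ Fface]] Fp Cp s.
have [->|vn0] := eqVneq v 0; first by rewrite scaler0 addr0.
have [->|sn0] := eqVneq s 0; first by rewrite scale0r addr0.
apply: (Fface (p + (2 * s) *: v) (p + (- (2 * s)) *: v)).
- move/addrI/eqP; rewrite -subr_eq0 -scalerBl scaler_eq0 (negbTE vn0) orbF.
  by rewrite opprK -mulr2n mulrn_eq0 mulf_eq0 pnatr_eq0 (negbTE sn0).
- by move=> z /oseg_line [c ->].
- exists p; split => //; exists (1 / 2); do 2![split; first lra].
  by rewrite comb_lineE (_ : _ * _ + _ = 0) ?scale0r ?addr0 //; field.
- exists (3 / 4); do 2![split; first lra].
  by rewrite comb_lineE; congr (_ + _ *: _); field.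
Qed.

Lemma min_face_line_core C p v z :
  convex_set C -> line_core C v p -> min_face p C z -> line_core (min_face p C) v z.
Proof.
move=> cC Cp pCz s F faceF Fp.
exact: (pCz _ (is_face_line_core v cC faceF) (line_core_face faceF Fp Cp)).
Qed.

End Faces.

Theorem mainTheorem6 (R : realFieldType) (V : lmodType R) (m : nat)
  (Rf : V -> option R) (f : 'rV[R]_m -> option R) (Phi : {linear V -> 'rV[R]_m})
  (p : V) :
  convex_fun Rf -> convex_fun f ->
  (* p is a minimizer of u |-> R(u) + f(Phi u) *)
  (forall w : V, ext_le (ext_add (Rf p) (f (Phi p))) (ext_add (Rf w) (f (Phi w)))) ->
  ext_add (Rf p) (f (Phi p)) <> None ->
  let S := fun u : V => forall w : V,
             ext_le (ext_add (Rf u) (f (Phi u))) (ext_add (Rf w) (f (Phi w))) in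
  let K := lineality (fun u : V => ext_le (Rf u) (Rf p)) in
  let L := fun v : V => Phi v = 0 in
  forall z v : V, min_face p S z -> K v -> L v -> min_face p S (z + v).
Proof.
move=> cR cf pmin _ S K L z v pSz Kv Lv.
have cS : convex_set S.
  apply: (convex_set_argmin (g := fun u => ext_add (Rf u) (f (Phi u)))).
  exact: convex_fun_add cR (convex_fun_linear_comp (Phi := Phi) cf).
have Sp : line_core S v p.
  move=> s w; apply: ext_le_trans (pmin w).
  rewrite linearD linearZ /= Lv scaler0 addr0; apply: ext_le_addl.
  exact: Kv (ext_le_refl _).
by rewrite -[v]scale1r; apply: min_face_line_core.
Qed.
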